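(* Let $V$ be a finite set, $p:2^V\to\mathbb{Z}$ a fully supermodular function with $p(\emptyset)=0$, $f,g:V\to\mathbb{Z}$ with $f\le g$, $B=B'(p)$, and suppose $B^{\square}:=B\cap T(f,g)$ contains an integral point. Let $T\subseteq V$. Then there exist a box $T(f',g')\subseteq T(f,g)$ and a subset $X_T\subseteq V$ such that an element $m\in B^{\square}\cap\mathbb{Z}^V$ minimizes $\widetilde m(T)$ over $B^{\square}\cap\mathbb{Z}^V$ if and only if $\widetilde m(X_T)=p(X_T)$ and $m\in B\cap\mathbb{Z}^V\cap T(f',g')$.
   Context: $\widetilde x(Z)=\sum_{v\in Z}x(v)$; $B'(p)=\{x\in\mathbb{R}^V:\widetilde x(V)=p(V),\ \widetilde x(Z)\ge p(Z)\ \forall Z\subset V\}$; $T(f,g)=\{x\in\mathbb{R}^V:f\le x\le g\}$. Fully supermodular: $p(X)+p(Y)\le p(X\cap Y)+p(X\cup Y)$ for all $X,Y\subseteq V$. *)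

From mathcomp Require Import all_boot all_order all_algebra.
Set Implicit Arguments. Unset Strict Implicit. Unset Printing Implicit Defensive.
Import Order.TTheory GRing.Theory Num.Theory.
Local Open Scope ring_scope.

Definition xsum (V : finType) (x : V -> int) (Z : {set V}) : int :=
  \sum_(v in Z) x v.

Definition fully_supermodular (V : finType) (p : {set V} -> int) : Prop :=
  forall X Y : {set V}, p X + p Y <= p (X :&: Y) + p (X :|: Y).

Definition inBp (V : finType) (p : {set V} -> int) (x : V -> int) : Prop :=
  xsum x setT = p setT /\ (forall Z : {set V}, Z \proper setT -> p Z <= xsum x Z).

Definition inT (V : finType) (f g : V -> int) (x : V -> int) : Prop :=
  forall v, f v <= x v <= g v.

Definition box_sub (V : finType) (f' g' f g : V -> int) : Prop :=
  forall x : V -> int, inT f' g' x -> inT f g x.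

From mathcomp Require Import all_boot all_order all_algebra zify.
From Stdlib Require Import Classical.
Set Implicit Arguments. Unset Strict Implicit. Unset Printing Implicit Defensive.
Import Order.TTheory GRing.Theory Num.Theory.
Local Open Scope ring_scope.

(* Let x be an integral minimizer of x~(T) over B^box and call a set W tight
   when x~(W) = p(W).  By supermodularity tight sets are closed under union
   and intersection.  If some u outside T could still be raised (x u < g u)
   while some v in T could be lowered (f v < x v), then x + chi_u - chi_v
   would be a better point of B^box unless a tight set separates v from u.
   Hence the smallest tight set Z containing all lowerable elements of T has
   x = g on Z \ T and x = f on T \ Z.  Splitting
     m~(T) = m~(Z) - m~(Z \ T) + m~(T \ Z) >= p(Z) - g~(Z \ T) + f~(T \ Z)
   for every m in B^box, with equality at x, shows that the minimizers are
   exactly the m that are tight on Z and pinned to g on Z \ T and to f on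
   T \ Z: take X_T = Z and shrink the box on these two sets. *)

Lemma int_has_min (P : int -> Prop) (lb : int) :
  (forall z, P z -> lb <= z) -> (exists z, P z) ->
  exists2 z, P z & forall w, P w -> z <= w.
Proof.
move=> Plb [z0 Pz0]; apply: NNPP => nomin.
suff above n : forall z, P z -> lb + n%:Z <= z.
  by have := above `|z0 - lb|.+1 z0 Pz0; lia.
elim: n => [z /Plb|n IHn z Pz]; first by rewrite addr0.
have := IHn z Pz; rewrite le_eqVlt => /orP [/eqP eq_z|]; last by lia.
by case: nomin; exists z => // w /IHn; rewrite eq_z.
Qed.

Section Sums.
Variable V : finType.
Implicit Types (x y : V -> int) (A B W : {set V}).

Lemma xsum0 x : xsum x set0 = 0.
Proof. by rewrite /xsum big_set0. Qed.

Lemma xsum_setID x A B : xsum x A = xsum x (A :&: B) + xsum x (A :\: B).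
Proof. by rewrite /xsum (big_setID B). Qed.

Lemma xsumIU x A B : xsum x A + xsum x B = xsum x (A :&: B) + xsum x (A :|: B).
Proof.
rewrite (xsum_setID x (A :|: B) A) (xsum_setID x B A).
by rewrite setUK setDUl setDv set0U setIC; lia.
Qed.

Lemma xsum_diff x A B : xsum x A = xsum x B - xsum x (B :\: A) + xsum x (A :\: B).
Proof. by rewrite (xsum_setID x A B) (xsum_setID x B A) setIC; lia. Qed.

Lemma ler_xsum x y A : {in A, forall v, x v <= y v} -> xsum x A <= xsum y A.
Proof. by move=> le_xy; apply: ler_sum. Qed.

Lemma xsum_eq_le x y A :
  {in A, forall v, x v <= y v} -> xsum x A = xsum y A -> {in A, x =1 y}.
Proof.
move=> le_xy eq_xy v vA.
have := (leif_sum (fun w (wA : w \in A) => leif_eq (le_xy w wA))).2.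
by rewrite -/(xsum x A) -/(xsum y A) eq_xy eqxx => /esym/forall_inP/(_ v vA)/eqP.
Qed.

Lemma xsum_indicator u W : xsum (fun w => (w == u)%:R) W = (u \in W)%:R.
Proof.
rewrite /xsum; case: (boolP (u \in W)) => uW.
  by rewrite (bigD1 u) //= eqxx big1 ?addr0 // => w /andP[_ /negbTE ->].
by rewrite big1 // => w wW; case: eqP => // wu; rewrite -wu wW in uW.
Qed.

Definition exchange x (u v : V) : V -> int :=
  fun w => x w + (w == u)%:R - (w == v)%:R.

Lemma xsum_exchange x u v W :
  xsum (exchange x u v) W = xsum x W + (u \in W)%:R - (v \in W)%:R.
Proof.
by rewrite /xsum !big_split sumrN /= -!/(xsum _ W) !xsum_indicator.
Qed.

Lemma inT_exchange (f g : V -> int) x u v : inT f g x -> u != v ->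
  x u < g u -> f v < x v -> inT f g (exchange x u v).
Proof.
move=> xT uv ltu ltv w; rewrite /exchange.
have [->|wu] := eqVneq w u; first by rewrite (negbTE uv) /=; have := xT u; lia.
have [->|wv] := eqVneq w v; first by have := xT v; lia.
by have := xT w; lia.
Qed.

End Sums.

Section Tight.
Variables (V : finType) (p : {set V} -> int).
Hypothesis p_supermod : fully_supermodular p.
Implicit Types (x : V -> int) (W X Y : {set V}).

Lemma inBp_ge x W : inBp p x -> p W <= xsum x W.
Proof.
case=> xT xW; have [/xW //|] := boolP (W \proper setT).
by rewrite properT negbK => /eqP ->; rewrite xT.
Qed.

Definition tight x W : bool := xsum x W == p W.

Lemma tightT x : inBp p x -> tight x setT.
Proof. by case=> xT _; rewrite /tight xT. Qed.

Lemma tight0 x : p set0 = 0 -> tight x set0.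
Proof. by move=> p0; rewrite /tight xsum0 p0. Qed.

Lemma tightIU x X Y : inBp p x -> tight x X -> tight x Y ->
  tight x (X :&: Y) && tight x (X :|: Y).
Proof.
move=> xB /eqP tX /eqP tY; have := p_supermod X Y; have := xsumIU x X Y.
by have := inBp_ge (X :&: Y) xB; have := inBp_ge (X :|: Y) xB; rewrite /tight; lia.
Qed.

Lemma tight_bigcap x (P : pred {set V}) : inBp p x ->
  (forall W, P W -> tight x W) -> tight x (\bigcap_(W | P W) W).
Proof.
move=> xB tP; apply: (big_ind (tight x)) => //; first exact: tightT.
by move=> X Y tX tY; case/andP: (tightIU xB tX tY).
Qed.

Lemma tight_bigcup x (P : pred {set V}) : p set0 = 0 -> inBp p x ->
  (forall W, P W -> tight x W) -> tight x (\bigcup_(W | P W) W).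
Proof.
move=> p0 xB tP; apply: (big_ind (tight x)) => //; first exact: tight0.
by move=> X Y tX tY; case/andP: (tightIU xB tX tY).
Qed.

(* Only the sets containing v but not u lose a unit, and none of them is tight. *)
Lemma inBp_exchange x u v : inBp p x -> u != v ->
  (forall W, v \in W -> u \notin W -> ~~ tight x W) ->
  inBp p (exchange x u v).
Proof.
move=> xB uv untight; split.
  by rewrite xsum_exchange !inE addrK; case: xB.
move=> W _; rewrite xsum_exchange; have := inBp_ge W xB.
case: (boolP (v \in W)) => vW; case: (boolP (u \in W)) => uW /=; try lia.
by move: (untight W vW uW); rewrite /tight; lia.
Qed.

End Tight.

Section Minimizers.
Variables (V : finType) (p : {set V} -> int) (f g : V -> int) (T : {set V}).
Implicit Types (x m : V -> int) (W Z : {set V}).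

Definition box_min x :=
  forall m, inBp p m -> inT f g m -> xsum x T <= xsum m T.

Lemma exists_box_min : (exists m, inBp p m /\ inT f g m) ->
  exists x, [/\ inBp p x, inT f g x & box_min x].
Proof.
move=> [m0 [m0B m0T]].
pose P z := exists m, [/\ inBp p m, inT f g m & xsum m T = z].
have Plb z : P z -> xsum f T <= z.
  by case=> m [_ mT <-]; apply: ler_xsum => v _; case/andP: (mT v).
have Pm0 : P (xsum m0 T) by exists m0.
have [_ [x [xB xT <-]] xmin] := int_has_min Plb (ex_intro _ _ Pm0).
by exists x; split=> // m mB mT; apply: xmin; exists m.
Qed.

Lemma box_min_separated x u v : inBp p x -> inT f g x -> box_min x ->
  u \notin T -> v \in T -> x u < g u -> f v < x v ->
  exists2 W, tight p x W & (v \in W) && (u \notin W).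
Proof.
move=> xB xT xmin uT vT ltu ltv.
have uv : u != v by apply: contraNneq uT => ->.
have [/existsP[W /andP[tW sep]]|noW] :=
  boolP [exists W, tight p x W && ((v \in W) && (u \notin W))]; first by exists W.
have untight W : v \in W -> u \notin W -> ~~ tight p x W.
  by move=> vW uW; apply: contra noW => tW; apply/existsP; exists W; rewrite tW vW.
have := xmin _ (inBp_exchange xB uv untight) (inT_exchange xT uv ltu ltv).
by rewrite xsum_exchange (negbTE uT) vT /=; lia.
Qed.

Lemma box_min_tight_set x :
  fully_supermodular p -> p set0 = 0 -> inBp p x -> inT f g x -> box_min x ->
  exists Z, [/\ tight p x Z, {in Z :\: T, x =1 g} & {in T :\: Z, x =1 f}].
Proof.
move=> p_supermod p0 xB xT xmin.
pose A := [set v in T | f v < x v].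
pose Z := \bigcap_(W | tight p x W && (A \subset W)) W.
have AZ : A \subset Z by apply/bigcapsP => W /andP[].
exists Z; split.
- by apply: tight_bigcap => // W /andP[].
- move=> u; rewrite inE => /andP[uT uZ]; have /andP[_ xg] := xT u.
  rewrite le_eqVlt in xg; case/orP: xg => [/eqP //|ltu]; exfalso.
  pose U := \bigcup_(W | tight p x W && (u \notin W)) W.
  have AU : A \subset U.
    apply/subsetP => v; rewrite inE => /andP[vT ltv].
    have [W tW /andP[vW uW]] := box_min_separated xB xT xmin uT vT ltu ltv.
    by apply/bigcupP; exists W; rewrite ?tW.
  have tU : tight p x U by apply: tight_bigcup => // W /andP[].
  have /bigcupP[W /andP[_ /negP uW //]] : u \in U.
  by apply: subsetP uZ; apply: bigcap_inf; rewrite tU AU.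
- move=> v; rewrite inE => /andP[vZ vT]; have /andP[fx _] := xT v.
  rewrite le_eqVlt in fx; case/orP: fx => [/eqP //|ltv].
  by case/negP: vZ; apply: (subsetP AZ); rewrite inE vT.
Qed.

Definition pinned_bound Z := p Z - xsum g (Z :\: T) + xsum f (T :\: Z).

Lemma pinned_bound_le m Z : inBp p m -> inT f g m -> pinned_bound Z <= xsum m T.
Proof.
move=> mB mT; rewrite (xsum_diff m T Z) /pinned_bound.
have := inBp_ge Z mB.
have := @ler_xsum _ m g (Z :\: T) (fun v _ => proj2 (andP (mT v))).
have := @ler_xsum _ f m (T :\: Z) (fun v _ => proj1 (andP (mT v))).
lia.
Qed.

Lemma pinned_boundP m Z : inBp p m -> inT f g m ->
  xsum m T = pinned_bound Z <->
  [/\ tight p m Z, {in Z :\: T, m =1 g} & {in T :\: Z, m =1 f}].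
Proof.
move=> mB mT; rewrite (xsum_diff m T Z) /pinned_bound /tight.
have leZ := inBp_ge Z mB.
have le_g : {in Z :\: T, forall v, m v <= g v} by move=> v _; case/andP: (mT v).
have le_f : {in T :\: Z, forall v, f v <= m v} by move=> v _; case/andP: (mT v).
have sum_g := ler_xsum le_g; have sum_f := ler_xsum le_f; split.
- move=> eq_bound; split; first by apply/eqP; lia.
  + by apply: xsum_eq_le => //; lia.
  + by move=> v vTZ; apply/esym; apply: xsum_eq_le v vTZ => //; lia.
- case=> /eqP tZ mg mf.
  have -> : xsum m (Z :\: T) = xsum g (Z :\: T) by apply: eq_bigr.
  have -> : xsum m (T :\: Z) = xsum f (T :\: Z) by apply: eq_bigr.
  by rewrite tZ.
Qed.

Definition pinned_lo Z v := if v \in Z :\: T then g v else f v.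
Definition pinned_hi Z v := if v \in T :\: Z then f v else g v.

Lemma box_sub_pinned Z :
  (forall v, f v <= g v) -> box_sub (pinned_lo Z) (pinned_hi Z) f g.
Proof.
move=> fg y yT v; have := yT v; have := fg v; rewrite /pinned_lo /pinned_hi.
by case: ifP; case: ifP; lia.
Qed.

Lemma inT_pinnedP m Z : inT f g m ->
  inT (pinned_lo Z) (pinned_hi Z) m <-> {in Z :\: T, m =1 g} /\ {in T :\: Z, m =1 f}.
Proof.
move=> mT; rewrite /pinned_lo /pinned_hi.
have ZT_TZ v : v \in Z :\: T -> (v \in T :\: Z) = false.
  by rewrite !inE => /andP[/negbTE -> _]; rewrite andbF.
have TZ_ZT v : v \in T :\: Z -> (v \in Z :\: T) = false.
  by rewrite !inE => /andP[/negbTE -> _]; rewrite andbF.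
split=> [mP|[mg mf] v].
  split=> v vD; have := mP v; have := mT v; rewrite vD.
    by rewrite ZT_TZ //; lia.
  by rewrite TZ_ZT //; lia.
have := mT v; have [vZT|_] := boolP (v \in Z :\: T).
  by rewrite ZT_TZ // mg //; lia.
by case: ifP => [vTZ|_] //; rewrite mf //; lia.
Qed.

End Minimizers.

Theorem theorem5p10 (V : finType) (p : {set V} -> int) (f g : V -> int)
  (Tset : {set V})
  (hsup : fully_supermodular p) (hp0 : p set0 = 0)
  (hfg : forall v, f v <= g v)
  (hne : exists m : V -> int, inBp p m /\ inT f g m) :
  exists (f' g' : V -> int) (XT : {set V}),
    box_sub f' g' f g /\
    forall m : V -> int, inBp p m -> inT f g m ->
      ((forall m' : V -> int, inBp p m' -> inT f g m' ->
          xsum m Tset <= xsum m' Tset)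
       <-> (xsum m XT = p XT /\ inBp p m /\ inT f' g' m)).
Proof.
have [x [xB xT xmin]] := exists_box_min Tset hne.
have [Z [tZ xg xf]] := box_min_tight_set hsup hp0 xB xT xmin.
have x_bound : xsum x Tset = pinned_bound p f g Tset Z by apply/pinned_boundP.
exists (pinned_lo f g Tset Z), (pinned_hi f g Tset Z), Z.
split=> [|m mB mT]; first exact: box_sub_pinned.
rewrite inT_pinnedP //; split.
- move=> mmin.
  have m_bound : xsum m Tset = pinned_bound p f g Tset Z.
    by apply/le_anti; rewrite pinned_bound_le // -x_bound mmin.
  by have [/eqP tmZ mg mf] := (pinned_boundP Tset Z mB mT).1 m_bound.
- move=> [tmZ [_ [mg mf]]] m' m'B m'T.
  have m_bound : xsum m Tset = pinned_bound p f g Tset Z.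
    by apply/pinned_boundP => //; split=> //; apply/eqP.
  by rewrite m_bound pinned_bound_le.
Qed.
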